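(* Let $\mathcal{Z}$ be a data space with unknown distribution $\mu$, let $S=(Z_1,\dots,Z_n)$ have i.i.d. entries $Z_i\sim\mu$, let the learning algorithm be a Markov kernel $P_{W|S}$ producing a hypothesis $W$ in a hypothesis class $\mathcal{W}$, with $P_W$ the marginal of $W$ and $P_{W,Z_i}$ the joint law of $(W,Z_i)$. Let $l:\mathcal{W}\times\mathcal{Z}\to\mathbb{R}^+$ be a loss function and assume that for every $i=1,\dots,n$, $l(W,Z_i)$ is $\sigma$-subgaussian when $(W,Z_i)$ is distributed according to $\frac{P_{W,Z_i}+P_W\otimes\mu}{2}$. If $I(W;Z_i)\ge 8(\log 2)^2$ for all $i=1,\dots,n$, then $$\frac2n\sum_{i=1}^n\sqrt{2\sigma^2 I_{JS}(W;Z_i)}\le\frac1n\sum_{i=1}^n\sqrt{2\sigma^2 I(W;Z_i)},$$ i.e. the Jensen–Shannon information upper bound $\frac2n\sum_i\sqrt{2\sigma^2 I_{JS}(W;Z_i)}$ on $|\overline{\text{gen}}(P_{W|S},\mu)|$ is no larger than the mutual information upper bound $\frac1n\sum_i\sqrt{2\sigma^2 I(W;Z_i)}$.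
   Context: A random variable $X$ is $\sigma$-subgaussian if $\mathbb{E}[e^{\lambda(X-\mathbb{E}X)}]\le e^{\lambda^2\sigma^2/2}$ for all $\lambda\in\mathbb{R}$. Expected generalization error: $\overline{\text{gen}}(P_{W|S},\mu)=\mathbb{E}_{P_{W,S}}\big[\int l(W,z)\,\mu(dz)-\frac1n\sum_{i=1}^n l(W,Z_i)\big]$. Mutual information: $I(W;Z_i)=KL(P_{W,Z_i}\|P_W\otimes P_{Z_i})$. Jensen–Shannon information: $I_{JS}(W;Z_i)=\frac12 KL\big(P_{W,Z_i}\|M_i\big)+\frac12 KL\big(P_W\otimes P_{Z_i}\|M_i\big)$ with $M_i=\frac{P_{W,Z_i}+P_W\otimes P_{Z_i}}{2}$; here $P_{Z_i}=\mu$, $KL$ is the Kullback–Leibler divergence, and $\log$ is the natural logarithm. *)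

From HB Require Import structures.
From mathcomp Require Import all_boot all_order all_algebra.
From mathcomp Require Import all_classical all_reals all_analysis.
Set Implicit Arguments. Unset Strict Implicit. Unset Printing Implicit Defensive.
Import Order.TTheory GRing.Theory Num.Theory.
Import numFieldNormedType.Exports.
Local Open Scope classical_set_scope.
Local Open Scope ring_scope.

Definition KL d (T : measurableType d) (R : realType)
    (P Q : probability T R) : \bar R :=
  if pselect (P `<< Q) then
    (\int[P]_x (ln (fine (Radon_Nikodym (charge_of_finite_measure P) Q x)))%:E)%E
  else +oo%E.

Definition esqrt (R : realType) (x : \bar R) : \bar R :=
  match x with
  | r%:E => (Num.sqrt r)%:E
  | +oo%E => +oo%E
  | -oo%E => 0%E
  end.

Definition subgaussian d (T : measurableType d) (R : realType)
    (P : probability T R) (X : T -> R) (sigma : R) : Prop :=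
  measurable_fun [set: T] X /\ P.-integrable [set: T] (EFin \o X) /\
  forall lam : R,
    (\int[P]_x (expR (lam * (X x - fine (\int[P]_y (X y)%:E))))%:E
      <= (expR (lam ^+ 2 * sigma ^+ 2 / 2))%:E)%E.

Definition iid_law d (Z : measurableType d) (R : realType) (n : nat)
    (mu : probability Z R) (PS : probability (n.-tuple Z) R) : Prop :=
  forall A : 'I_n -> set Z, (forall i, measurable (A i)) ->
    PS [set s | forall i, A i (tnth s i)] = (\prod_(i < n) mu (A i))%E.

From HB Require Import structures.
From mathcomp Require Import all_boot all_order all_algebra.
From mathcomp Require Import all_classical all_reals all_analysis.
From mathcomp Require Import measurable_realfun lra.
Set Implicit Arguments. Unset Strict Implicit. Unset Printing Implicit Defensive.
Import Order.TTheory GRing.Theory Num.Theory.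
Import numFieldNormedType.Exports.
Local Open Scope classical_set_scope.
Local Open Scope ring_scope.

(* The mixture M_i = (P_{W,Z_i} + P_W (x) mu) / 2 dominates each of its two
   components with density at most 2, so both KL terms of I_JS are at most
   log 2 and 2 sqrt (2 s^2 I_JS) <= 2 sqrt (2 s^2 log 2) = sqrt (8 s^2 log 2).
   The hypothesis I >= 8 (log 2)^2 gives sqrt (2 s^2 I) >= sqrt (16 s^2 (log 2)^2),
   which is at least sqrt (8 s^2 log 2) because log 2 >= 1/2. *)

Section integral_bounded_above.
Context d (T : measurableType d) (R : realType).
Local Open Scope ereal_scope.

Lemma integral_ae_le_cst (P : probability T R) (g : T -> \bar R) (r : R) :
  (0 <= r)%R -> measurable_fun [set: T] g ->
  {ae P, forall x, g x <= r%:E} -> \int[P]_x g x <= r%:E.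
Proof.
move=> r0 mg gr; rewrite integralE.
have gpr : \int[P]_x g^\+ x <= r%:E.
  have gpr_ae : {ae P, forall x, [set: T] x -> g^\+ x <= (cst r%:E) x}.
    by apply: filterS gr => x gxr _; rewrite funeposE /= ge_max gxr lee_fin r0.
  apply: le_trans (ae_ge0_le_integral _ _ _ _ _ gpr_ae) _ => //.
    exact: measurable_funepos.
  rewrite integral_cst // -[leRHS]mule1.
  by apply: lee_wpmul2l; [rewrite lee_fin | exact: probability_le1].
by apply: le_trans (leeB gpr (integral_ge0 _ _)) _; rewrite ?sube0.
Qed.

End integral_bounded_above.

Section KL_bounded_density.
Context d (T : measurableType d) (R : realType).
Variables (P Q : probability T R) (c : R).
Hypothesis c_ge1 : 1 <= c.
Hypothesis P_le_cQ : forall C, measurable C -> (P C <= c%:E * Q C)%E.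
Local Open Scope ereal_scope.

Lemma le_scale_null_dominates : P `<< Q.
Proof.
move=> N QN A mA AN; apply/eqP; rewrite eq_le measure_ge0 andbT.
by rewrite (le_trans (P_le_cQ mA)) // (QN A mA AN) mule0.
Qed.

Let f := Radon_Nikodym (charge_of_finite_measure P) Q.

Lemma Radon_Nikodym_le_ae : {ae P, forall x, f x <= c%:E}.
Proof.
have PQ : charge_of_finite_measure P `<< Q := le_scale_null_dominates.
have fint : Q.-integrable setT f by exact: Radon_Nikodym_integrable.
have mf : measurable_fun [set: T] f by exact: measurable_int fint.
pose A := [set x | c%:E < f x].
have mA : measurable A.
  by have := measurable_lte measurableT (measurable_cst c%:E) mf; rewrite setTI.
(* On A, [c < f] and [P <= c Q] give opposite inequalities between integrals. *)
have fAc : ae_eq Q A f (cst c%:E).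
  apply: integral_ae_eq => //; first exact: integrableS fint.
  move=> E EA mE; apply/eqP; rewrite eq_le; apply/andP; split.
    by rewrite -Radon_Nikodym_integral // integral_cst // P_le_cQ.
  apply: ge0_le_integral => //.
  - by move=> x _; rewrite lee_fin (le_trans ler01).
  - exact: measurable_funS measurableT (subsetT _) mf.
  - by move=> x /EA /ltW.
apply: filterS (null_dominates_ae_eq mA le_scale_null_dominates fAc) => x fxc.
by have [/fxc ->|/negP] := pselect (A x); rewrite // -leNgt.
Qed.

Lemma KL_le_ln : KL P Q <= (ln c)%:E.
Proof.
rewrite /KL; case: pselect => [PQ|]; last by have := le_scale_null_dominates.
apply: integral_ae_le_cst; first by rewrite ln_ge0.
  apply/measurable_EFinP/measurableT_comp; first exact: measurable_ln.
  by apply: measurableT_comp.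
apply: filterS Radon_Nikodym_le_ae => x fxc; rewrite lee_fin.
have [fx0|fx0] := leP (fine (f x)) 0%R; first by rewrite ln0 // ln_ge0.
rewrite ler_ln ?posrE ?(lt_le_trans ltr01 c_ge1) //.
by rewrite -lee_fin fineK // Radon_Nikodym_fin_num.
Qed.

End KL_bounded_density.

Section Jensen_Shannon.
Context d (T : measurableType d) (R : realType).
Local Open Scope ereal_scope.

Lemma mixture_le_scale2 (P Q M : probability T R) :
  (forall C, measurable C -> M C = (P C + Q C) * (2^-1)%:E) ->
  forall C, measurable C -> P C <= 2%:E * M C.
Proof.
move=> ME C mC; rewrite ME // muleC -muleA -EFinM mulVf ?pnatr_eq0 // mule1.
exact/leeDl/measure_ge0.
Qed.

Lemma JS_le_ln2 (P Q M : probability T R) :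
  (forall C, measurable C -> M C = (P C + Q C) * (2^-1)%:E) ->
  (2^-1)%:E * KL P M + (2^-1)%:E * KL Q M <= (ln 2)%:E.
Proof.
move=> ME; have QPE C : measurable C -> M C = (Q C + P C) * (2^-1)%:E.
  by move=> mC; rewrite addeC ME.
have KLP := KL_le_ln (ler1n R 2) (mixture_le_scale2 ME).
have KLQ := KL_le_ln (ler1n R 2) (mixture_le_scale2 QPE).
have h2 : 0 <= (2^-1 : R)%:E by rewrite lee_fin invr_ge0.
apply: le_trans (leeD (lee_wpmul2l h2 KLP) (lee_wpmul2l h2 KLQ)) _.
by rewrite -!EFinM -EFinD lee_fin; lra.
Qed.

End Jensen_Shannon.

Lemma ln2_ge_inv2 (R : realType) : 2^-1 <= ln (2 : R).
Proof.
have expN : 2^-1 <= expR (- 2^-1 : R).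
  by have := expR_ge1Dx (- 2^-1 : R); congr (_ <= _); lra.
have exp_le2 : expR (2^-1 : R) <= 2.
  by move: expN; rewrite expRN lef_pV2 ?posrE ?expR_gt0.
by rewrite -[leLHS]expRK ler_ln ?posrE ?expR_gt0.
Qed.

Lemma sqrt_ln2_le (R : realType) (a : R) :
  0 <= a -> 2 * Num.sqrt (a * ln 2) <= Num.sqrt (a * (8 * ln 2 ^+ 2)).
Proof.
move=> a0; have ln2 := ln2_ge_inv2 R.
have ln2_ge0 : 0 <= ln (2 : R) by lra.
have ln2_excess : 0 <= a * ln 2 * (ln 2 - 2^-1).
  by apply: mulr_ge0; [exact: mulr_ge0 | rewrite subr_ge0].
rewrite -[leLHS]ger0_norm ?(mulr_ge0 _ (sqrtr_ge0 _)) // -sqrtr_sqr.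
rewrite exprMn (sqr_sqrtr (mulr_ge0 a0 ln2_ge0)); apply: ler_wsqrtr; nra.
Qed.

Lemma esqrt_ge0 (R : realType) (x : \bar R) : (0 <= esqrt x)%E.
Proof. by case: x => [r||] //=; rewrite lee_fin sqrtr_ge0. Qed.

Lemma lee_esqrt (R : realType) : {homo @esqrt R : x y / x <= y}%E.
Proof.
move=> [r||] [s||] //= rs; rewrite ?lee_fin ?leey ?sqrtr_ge0 //.
by apply: ler_wsqrtr; rewrite -lee_fin.
Qed.

Theorem proposition2 (R : realType)
  (dZ : measure_display) (Zsp : measurableType dZ)
  (dW : measure_display) (Wsp : measurableType dW)
  (n : nat) (mu : probability Zsp R)
  (PS : probability (n.-tuple Zsp) R)
  (K : R.-pker (n.-tuple Zsp) ~> Wsp)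
  (PW : probability Wsp R)
  (PWZ : 'I_n -> probability (Wsp * Zsp)%type R)
  (M : 'I_n -> probability (Wsp * Zsp)%type R)
  (l : Wsp -> Zsp -> R) (sigma : R) :
  iid_law mu PS ->
  (forall B, measurable B -> PW B = (\int[PS]_s K s B)%E) ->
  (forall i C, measurable C ->
     PWZ i C = (\int[PS]_s K s [set w | C (w, tnth s i)])%E) ->
  (forall i C, measurable C ->
     M i C = ((PWZ i C + (PW \x mu)%E C) * (2^-1)%:E)%E) ->
  (forall w z, 0 <= l w z) ->
  (forall i, subgaussian (M i) (fun p => l p.1 p.2) sigma) ->
  (forall i, ((8 * ln 2 ^+ 2)%:E <= KL (PWZ i) (PW \x mu)%E)%E) ->
  ((2 / n%:R)%:E *
     \sum_(i < n) esqrt ((2 * sigma ^+ 2)%:E *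
        ((2^-1)%:E * KL (PWZ i) (M i) + (2^-1)%:E * KL (PW \x mu)%E (M i)))
   <= (n%:R^-1)%:E *
     \sum_(i < n) esqrt ((2 * sigma ^+ 2)%:E * KL (PWZ i) (PW \x mu)%E))%E.
Proof.
move=> _ _ _ ME _ _ KL_ge.
set a := 2 * sigma ^+ 2.
have a0 : 0 <= a by rewrite mulr_ge0 ?sqr_ge0.
have a0E : (0 <= a%:E)%E by rewrite lee_fin.
have twice_JS_le_MI i :
    (2%:E * esqrt (a%:E * ((2^-1)%:E * KL (PWZ i) (M i)
                           + (2^-1)%:E * KL (PW \x mu)%E (M i)))
     <= esqrt (a%:E * KL (PWZ i) (PW \x mu)%E))%E.
  apply: le_trans (lee_esqrt (lee_wpmul2l a0E (KL_ge i))).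
  apply: le_trans (_ : 2%:E * (Num.sqrt (a * ln 2))%:E <= _)%E; last first.
    by rewrite -EFinM lee_fin sqrt_ln2_le.
  apply: lee_wpmul2l => //; rewrite -[leRHS]/(esqrt (a * ln 2)%:E) EFinM.
  exact: lee_esqrt (lee_wpmul2l a0E (JS_le_ln2 (ME i))).
rewrite mulrC EFinM -muleA ge0_sume_distrr => [|i _]; last exact: esqrt_ge0.
by apply: lee_wpmul2l; [rewrite lee_fin invr_ge0 | apply: lee_sum].
Qed.
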